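(* Let $q$ be a power of an odd prime, $c\in\mathbb{F}_q^*$, and $f(X)=c(X^{q+1}-X^2)$ on $\mathbb{F}_{q^2}$. If $\alpha\in\mathbb{F}_{q^2}\setminus\mathbb{F}_q$, then the number of $\gamma\in\mathbb{F}_{q^2}$ with $f(\gamma)=\alpha$ is either $0$ or $2$. *)

From mathcomp Require Import all_boot all_algebra.
Set Implicit Arguments. Unset Strict Implicit. Unset Printing Implicit Defensive.
Import GRing.Theory.
Local Open Scope ring_scope.

(* F_q inside a finite field F of order q^2: the fixed points of x |-> x^q. *)
Definition in_Fq (F : finFieldType) (q : nat) (x : F) : bool := x ^+ q == x.

Definition fq (F : finFieldType) (q : nat) (c x : F) : F :=
  c * (x ^+ q.+1 - x ^+ 2).

(* Write u = g^q for a preimage g of alpha. Applying Frobenius to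
   alpha = c (g u - g^2) gives alpha^q = c (u g - u^2), hence
     alpha + alpha^q = - c (g - u)^2   and   alpha alpha^q = - c^2 g u (g - u)^2.
   As alpha is not in F_q, g <> u, so g u = alpha alpha^q / (c (alpha + alpha^q))
   and g^2 = g u - alpha / c is determined by alpha. The preimages of alpha are
   thus among the two square roots +-g, and f is even because q + 1 is. *)
From mathcomp Require Import all_boot all_algebra all_field.
From mathcomp Require Import ring.
Set Implicit Arguments. Unset Strict Implicit. Unset Printing Implicit Defensive.
Local Open Scope ring_scope.
Import GRing.Theory.

Lemma card_set_eq_sqr (F : finFieldType) (S : {set F}) :
  2%:R != 0 :> F -> 0 \notin S -> {in S, forall x, - x \in S} ->
  {in S &, forall x y, x ^+ 2 = y ^+ 2} ->
  (#|S| == 0)%N || (#|S| == 2)%N.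
Proof.
move=> two_nz S0 SN Ssqr; have [-> | [g Sg]] := set_0Vmem S; first by rewrite cards0.
have -> : S = [set g; - g].
  apply/setP => x; rewrite !inE; apply/idP/idP => [Sx | /orP[] /eqP -> //].
  - by rewrite -eqf_sqr (Ssqr x g).
  - exact: SN.
have g_nz : g != 0 by apply: contraNneq S0 => <-.
by rewrite cards2 -addr_eq0 -mulr2n -mulr_natr mulf_neq0.
Qed.

Lemma pchar_odd_two_neq0 (R : nzRingType) (p : nat) :
  p \in [pchar R] -> odd p -> 2%:R != 0 :> R.
Proof.
move=> pR p_odd; rewrite -(dvdn_pcharf pR) dvdn_prime2 ?(pcharf_prime pR) //.
by apply: contraTneq p_odd => ->.
Qed.

Lemma in_Fq0 (F : finFieldType) (q : nat) : (0 < q)%N -> in_Fq q (0 : F).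
Proof. by move=> q_gt0; rewrite /in_Fq expr0n gtn_eqF. Qed.

Section FqPolynomial.

Variables (F : finFieldType) (q : nat) (c : F).
Hypothesis q_pchar : [pchar F].-nat q.
Hypothesis frobK : forall x : F, x ^+ q ^+ q = x.
Hypothesis c_Fq : c ^+ q = c.
Hypothesis c_nz : c != 0.
Hypothesis q_gt0 : (0 < q)%N.

Lemma fq_frob (g : F) : fq q c g ^+ q = c * (g ^+ q * g - g ^+ q ^+ 2).
Proof.
rewrite /fq exprMn c_Fq exprDn_pchar // exprNn_pchar // exprSr exprMn frobK.
by rewrite exprAC (mulrC g).
Qed.

Lemma fq_add_frob (g : F) :
  fq q c g + fq q c g ^+ q = - c * (g - g ^+ q) ^+ 2.
Proof. by rewrite fq_frob /fq exprSr; ring. Qed.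

Lemma fq_mul_frob (g : F) :
  fq q c g * fq q c g ^+ q = - c ^+ 2 * (g * g ^+ q) * (g - g ^+ q) ^+ 2.
Proof. by rewrite fq_frob /fq exprSr; ring. Qed.

Lemma fq_in_Fq (g : F) : in_Fq q g -> fq q c g = 0.
Proof. by move=> /eqP gq; rewrite /fq exprSr gq subrr mulr0. Qed.

Definition fq_preimage_sqr (a : F) : F :=
  a * a ^+ q / (c * (a + a ^+ q)) - a / c.

Lemma sqr_fq_preimage (g a : F) : fq q c g = a -> ~~ in_Fq q a ->
  g ^+ 2 = fq_preimage_sqr a.
Proof.
move=> <- fg_notFq.
have g_notFq : ~~ in_Fq q g.
  by apply: contraNN fg_notFq => /fq_in_Fq ->; apply: in_Fq0.
have diff_nz : g - g ^+ q != 0 by rewrite subr_eq0 eq_sym.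
rewrite /fq_preimage_sqr fq_mul_frob fq_add_frob /fq [g ^+ q.+1]exprSr.
by field; rewrite oppr_eq0 c_nz diff_nz.
Qed.

Lemma fqN (g : F) : odd q -> fq q c (- g) = fq q c g.
Proof. by move=> q_odd; rewrite /fq sqrrN exprNn -signr_odd /= q_odd mul1r. Qed.

End FqPolynomial.

Theorem lemma5 (F : finFieldType) (p k q : nat)
  (hp : prime p) (hodd : odd p) (hk : (0 < k)%N) (hq : q = (p ^ k)%N)
  (hF : #|F| = (q ^ 2)%N)
  (c alpha : F) (hc : c != 0) (hcq : in_Fq q c) (ha : ~~ in_Fq q alpha) :
  let N := #|[set g : F | fq q c g == alpha]| in
  (N == 0)%N || (N == 2)%N.
Proof.
have pF : p \in [pchar F].
  by apply: (card_finPcharP (n := (k * 2)%N)); rewrite // hF hq expnM.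
have q_pchar : [pchar F].-nat q by rewrite hq pnatX (eq_pnat _ (pcharf_eq pF)) pnat_id.
have q_gt0 : (0 < q)%N by rewrite hq expn_gt0 prime_gt0.
have q_odd : odd q by rewrite hq oddX hodd orbT.
have frobK (x : F) : x ^+ q ^+ q = x by rewrite -exprM mulnn -hF expf_card.
have c_Fq : c ^+ q = c by apply/eqP.
have sqr_preimage := sqr_fq_preimage q_pchar frobK c_Fq hc q_gt0.
rewrite /=; apply: card_set_eq_sqr (pchar_odd_two_neq0 pF hodd) _ _ _ => [|x|x y].
- by rewrite inE fq_in_Fq ?in_Fq0 //; apply: contraNneq ha => <-; apply: in_Fq0.
- by rewrite !inE fqN.
- rewrite !inE => /eqP fx /eqP fy.
  by rewrite (sqr_preimage _ _ fx ha) (sqr_preimage _ _ fy ha).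
Qed.
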